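(* Assume $\hat\omega$ lies in the interior of $\mathbb{P}_\Omega$. The vertex-direction iteration with optimal step size $\alpha_n=\hat\alpha_n$, initialized at any $\omega^{(1)}\in\mathbb{P}_\Omega$, satisfies $$\|\omega^{(n+1)}-\hat\omega\|_{\mathbf K}^2\le\|\omega^{(1)}-\hat\omega\|_{\mathbf K}^2\exp\Big(-\frac{\alpha_*^2\,n}{4R_*^2}\Big),\qquad n\ge1,$$ where $R_*=[\lambda_{\max}(\mathbf K)(1-1/\Omega)]^{1/2}$, $\alpha_*=w_*/L$, $w_*=\min_i\hat\omega_i$ and $L=(\max_i\{\mathbf K^{-1}\}_{ii})^{1/2}$.
   Context: $\mathbf K$ is a real symmetric positive definite $\Omega\times\Omega$ matrix ($\Omega\ge2$) with largest eigenvalue $\lambda_{\max}(\mathbf K)$; $\|u\|_{\mathbf K}^2=u^T\mathbf K u$. $e_i$ is the $i$-th canonical basis vector of $\mathbb{R}^\Omega$ and $\mathbb{P}_\Omega=\{\omega\in\mathbb{R}^\Omega:\omega_i\ge0,\sum_i\omega_i=1\}$. The vertex-direction iteration is $\omega^{(n+1)}=\omega^{(n)}+\alpha_n(e_{i_n^+}-\omega^{(n)})$ with $i_n^+\in\arg\min_{i}e_i^T\mathbf K(\omega^{(n)}-\hat\omega)$; the optimal step size is $\hat\alpha_n=(e_{i_n^+}-\omega^{(n)})^T\mathbf K(\hat\omega-\omega^{(n)})/\|e_{i_n^+}-\omega^{(n)}\|_{\mathbf K}^2$ (if $e_{i_n^+}=\omega^{(n)}$ the iterate is left unchanged). *)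

From Stdlib Require Import Reals Lra Lia.
Open Scope R_scope.

(* Vectors of R^Omega are functions nat -> R; only indices < Omega matter.
   Matrices are functions nat -> nat -> R. *)
Definition vec := nat -> R.
Definition mat := nat -> nat -> R.

Fixpoint rsum (n : nat) (f : nat -> R) : R :=
  match n with O => 0 | S k => rsum k f + f k end.

Fixpoint rmax_upto (n : nat) (f : nat -> R) : R :=
  match n with O => f O | S k => Rmax (rmax_upto k f) (f (S k)) end.
Fixpoint rmin_upto (n : nat) (f : nat -> R) : R :=
  match n with O => f O | S k => Rmin (rmin_upto k f) (f (S k)) end.

Definition mat_vec (Om : nat) (K : mat) (v : vec) : vec :=
  fun i => rsum Om (fun j => K i j * v j).
Definition dot (Om : nat) (u v : vec) : R := rsum Om (fun i => u i * v i).
Definition normK2 (Om : nat) (K : mat) (u : vec) : R := dot Om u (mat_vec Om K u).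

Definition vsub (u v : vec) : vec := fun i => u i - v i.
Definition vadd (u v : vec) : vec := fun i => u i + v i.
Definition vscale (a : R) (u : vec) : vec := fun i => a * u i.

Definition e_vec (i : nat) : vec := fun j => if Nat.eq_dec j i then 1 else 0.

Definition symmetric (Om : nat) (K : mat) : Prop :=
  forall i j, (i < Om)%nat -> (j < Om)%nat -> K i j = K j i.
Definition nonzero_vec (Om : nat) (v : vec) : Prop :=
  exists i, (i < Om)%nat /\ v i <> 0.
Definition pos_def (Om : nat) (K : mat) : Prop :=
  forall v, nonzero_vec Om v -> 0 < normK2 Om K v.

Definition is_inverse (Om : nat) (K Kinv : mat) : Prop :=
  forall i j, (i < Om)%nat -> (j < Om)%nat ->
    rsum Om (fun k => K i k * Kinv k j) = (if Nat.eq_dec i j then 1 else 0) /\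
    rsum Om (fun k => Kinv i k * K k j) = (if Nat.eq_dec i j then 1 else 0).

Definition is_eigenvalue (Om : nat) (K : mat) (lam : R) : Prop :=
  exists v, nonzero_vec Om v /\ forall i, (i < Om)%nat -> mat_vec Om K v i = lam * v i.
Definition is_lambda_max (Om : nat) (K : mat) (lam : R) : Prop :=
  is_eigenvalue Om K lam /\ forall mu, is_eigenvalue Om K mu -> mu <= lam.

Definition in_simplex (Om : nat) (w : vec) : Prop :=
  (forall i, (i < Om)%nat -> 0 <= w i) /\ rsum Om w = 1.
Definition in_simplex_interior (Om : nat) (w : vec) : Prop :=
  (forall i, (i < Om)%nat -> 0 < w i) /\ rsum Om w = 1.

Definition vec_eq (Om : nat) (u v : vec) : Prop := forall i, (i < Om)%nat -> u i = v i.

Definition alpha_hat (Om : nat) (K : mat) (what w : vec) (i : nat) : R :=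
  dot Om (vsub (e_vec i) w) (mat_vec Om K (vsub what w))
  / normK2 Om K (vsub (e_vec i) w).

Definition is_vertex_choice (Om : nat) (K : mat) (what w : vec) (i : nat) : Prop :=
  (i < Om)%nat /\
  forall j, (j < Om)%nat ->
    mat_vec Om K (vsub w what) i <= mat_vec Om K (vsub w what) j.

Definition vd_step (Om : nat) (K : mat) (what w : vec) (i : nat) (w' : vec) : Prop :=
  (vec_eq Om (e_vec i) w -> vec_eq Om w' w) /\
  (~ vec_eq Om (e_vec i) w ->
     vec_eq Om w' (vadd w (vscale (alpha_hat Om K what w i) (vsub (e_vec i) w)))).

(* Write u = w - what and g = K u, and let i minimise g_i.  Exact line search
   towards e_i lowers ||u||_K^2 by gain^2 / ||e_i - w||_K^2, where
   gain = ||u||_K^2 + sum_j what_j (g_j - g_i).  As u sums to zero,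
   ||u||_K^2 = sum_j u_j (g_j - g_i) <= max_j |u_j| * sum_j (g_j - g_i), while the
   second summand of gain is at least w_* * sum_j (g_j - g_i); combined with
   u_j^2 <= (K^-1)_jj ||u||_K^2 this gives gain^2 >= (w_*/L)^2 ||u||_K^2.  The
   denominator is at most lambda_max ||e_i - w||^2 <= 2 lambda_max <= 4 R_*^2, so
   each step multiplies the error by at most 1 - a_*^2/(4 R_*^2) <= exp(-a_*^2/(4 R_*^2)). *)

From Stdlib Require Import Reals Lra Lia Classical.
From mathcomp Require all_boot all_algebra Rstruct.
Open Scope R_scope.

Module MxDichotomy.
Import all_boot all_algebra Rstruct GRing.Theory.
Local Open Scope ring_scope.

Lemma rsum_big n (f : nat -> R) : rsum n f = \sum_(i < n) f i.
Proof.
elim: n => [|n IH] /=; first by rewrite big_ord0.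
by rewrite big_ord_recr /= IH.
Qed.

Lemma left_kernel_or_left_inverse (Om : nat) (M : mat) :
  (exists v : vec, nonzero_vec Om v /\
     forall j, (j < Om)%coq_nat -> rsum Om (fun i => (v i * M i j)%R) = 0%R) \/
  (exists N : mat, forall i j, (i < Om)%coq_nat -> (j < Om)%coq_nat ->
     rsum Om (fun k => (N i k * M k j)%R) = e_vec j i).
Proof.
case: Om => [|n].
  by right; exists (fun _ _ => 0%R) => i j /leP.
pose A : 'M[R]_n.+1 := \matrix_(i, j) M i j.
have [/eqP/det0P [v vn0 vA]|dn0] := eqVneq (\det A) 0.
  left; exists (fun i => v 0 (inord i)); split.
    have [j vj] : exists j, v 0 j != 0.
      apply/existsP; move: vn0; apply: contraR; rewrite negb_exists => /forallP H.
      by apply/eqP/rowP => j; rewrite mxE; apply/eqP; move: (H j); rewrite negbK.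
    exists j; split; first by apply/leP.
    by rewrite inord_val; apply/eqP.
  move=> j /leP jn; rewrite rsum_big.
  transitivity ((v *m A) 0 (inord j)); last by rewrite vA mxE.
  rewrite mxE; apply: eq_bigr => i _; rewrite inord_val mxE inordK //.
right; have Au : A \in unitmx by rewrite unitmxE unitfE.
exists (fun i j => invmx A (inord i) (inord j)) => i j /leP io /leP jo.
rewrite rsum_big.
transitivity ((invmx A *m A) (inord i) (inord j)).
  rewrite mxE; apply: eq_bigr => k _; rewrite inord_val mxE inordK //.
rewrite mulVmx // mxE /e_vec.
case: Nat.eq_dec => [e|ne]; first by subst; rewrite eqxx.
case: eqP => // /(congr1 val) /=; rewrite !inordK // => /esym /ne.
Qed.

End MxDichotomy.

Set Bullet Behavior "Strict Subproofs".

Lemma rsum_ext n f g : (forall i, (i < n)%nat -> f i = g i) -> rsum n f = rsum n g.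
Proof.
  induction n as [|n IH]; simpl; intros H; [reflexivity|].
  rewrite (H n) by lia. rewrite IH by (intros; apply H; lia). reflexivity.
Qed.

Lemma rsum_add n f g : rsum n (fun i => f i + g i) = rsum n f + rsum n g.
Proof. induction n as [|n IH]; simpl; [lra | rewrite IH; ring]. Qed.

Lemma rsum_sub n f g : rsum n (fun i => f i - g i) = rsum n f - rsum n g.
Proof. induction n as [|n IH]; simpl; [lra | rewrite IH; ring]. Qed.

Lemma rsum_scal n c f : rsum n (fun i => c * f i) = c * rsum n f.
Proof. induction n as [|n IH]; simpl; [ring | rewrite IH; ring]. Qed.

Lemma rsum_const0 n : rsum n (fun _ => 0) = 0.
Proof. induction n as [|n IH]; simpl; [ring | rewrite IH; ring]. Qed.

Lemma rsum_le n f g : (forall i, (i < n)%nat -> f i <= g i) -> rsum n f <= rsum n g.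
Proof.
  induction n as [|n IH]; simpl; intros H; [lra|].
  assert (rsum n f <= rsum n g) by (apply IH; intros; apply H; lia).
  assert (f n <= g n) by (apply H; lia). lra.
Qed.

Lemma rsum_nonneg n f : (forall i, (i < n)%nat -> 0 <= f i) -> 0 <= rsum n f.
Proof. intros H. rewrite <- (rsum_const0 n). apply rsum_le. exact H. Qed.

Lemma rsum_term_le n f i :
  (forall j, (j < n)%nat -> 0 <= f j) -> (i < n)%nat -> f i <= rsum n f.
Proof.
  induction n as [|n IH]; simpl; intros H Hi; [lia|].
  destruct (Nat.eq_dec i n) as [->|Hin].
  - assert (0 <= rsum n f) by (apply rsum_nonneg; intros; apply H; lia). lra.
  - assert (f i <= rsum n f) by (apply IH; [intros; apply H; lia | lia]).
    assert (0 <= f n) by (apply H; lia). lra.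
Qed.

Lemma rsum_swap n m f :
  rsum n (fun i => rsum m (fun j => f i j)) = rsum m (fun j => rsum n (fun i => f i j)).
Proof.
  induction n as [|n IH]; simpl.
  - symmetry. apply rsum_const0.
  - rewrite IH, <- rsum_add. reflexivity.
Qed.

Lemma e_vec_sym i j : e_vec i j = e_vec j i.
Proof. unfold e_vec. destruct (Nat.eq_dec j i), (Nat.eq_dec i j); congruence. Qed.

Lemma rsum_mul_e_vec n f j : (j < n)%nat -> rsum n (fun k => f k * e_vec j k) = f j.
Proof.
  induction n as [|n IH]; simpl; intros Hj; [lia|].
  unfold e_vec at 2. destruct (Nat.eq_dec n j) as [->|Hnj].
  - rewrite (rsum_ext _ _ (fun _ => 0)), rsum_const0; [ring|].
    intros k Hk. unfold e_vec. destruct (Nat.eq_dec k j); [lia | ring].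
  - rewrite IH by lia. ring.
Qed.

(** * Dot products and bilinear forms *)

Lemma dot_ext Om x x' y y' :
  vec_eq Om x x' -> vec_eq Om y y' -> dot Om x y = dot Om x' y'.
Proof. intros Hx Hy. apply rsum_ext. intros k Hk. rewrite Hx, Hy by exact Hk. reflexivity. Qed.

Lemma dot_comm Om x y : dot Om x y = dot Om y x.
Proof. apply rsum_ext. intros; ring. Qed.

Lemma dot_e_vec_l Om i x : (i < Om)%nat -> dot Om (e_vec i) x = x i.
Proof. intros Hi. rewrite dot_comm. apply rsum_mul_e_vec, Hi. Qed.

Lemma dot_self_nonneg Om x : 0 <= dot Om x x.
Proof. apply rsum_nonneg. intros; nra. Qed.

Lemma dot_self_pos Om x : nonzero_vec Om x -> 0 < dot Om x x.
Proof.
  intros [i [Hi Hx]].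
  assert (0 < x i * x i) by nra.
  assert (x i * x i <= dot Om x x) by (apply (rsum_term_le Om (fun k => x k * x k)); [intros; nra | exact Hi]).
  lra.
Qed.

Lemma vec_eq_zero_of_not_nonzero Om x : ~ nonzero_vec Om x -> vec_eq Om x (fun _ => 0).
Proof.
  intros H i Hi. destruct (Req_dec (x i) 0) as [E|E]; [exact E|].
  exfalso. apply H. exists i. split; assumption.
Qed.

Lemma nonzero_vsub Om x y : ~ vec_eq Om x y -> nonzero_vec Om (vsub x y).
Proof.
  intros Hxy. apply NNPP. intros H. apply Hxy. intros k Hk.
  pose proof (vec_eq_zero_of_not_nonzero Om _ H k Hk) as E. unfold vsub in E. lra.
Qed.

Lemma dot_zero_l Om x y : vec_eq Om x (fun _ => 0) -> dot Om x y = 0.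
Proof.
  intros H. unfold dot.
  rewrite (rsum_ext _ _ (fun _ => 0)) by (intros k Hk; rewrite H by exact Hk; ring).
  apply rsum_const0.
Qed.

Definition bform (Om : nat) (A : mat) (x y : vec) : R := dot Om x (mat_vec Om A y).

Definition psd (Om : nat) (A : mat) : Prop := forall x, 0 <= bform Om A x x.

Lemma bform_ext Om A x x' y y' :
  vec_eq Om x x' -> vec_eq Om y y' -> bform Om A x y = bform Om A x' y'.
Proof.
  intros Hx Hy. apply dot_ext; [exact Hx|].
  intros k _. apply rsum_ext. intros j Hj. rewrite Hy by exact Hj. reflexivity.
Qed.

Lemma bform_linl Om A a b x y z :
  bform Om A (fun i => a * x i + b * y i) z = a * bform Om A x z + b * bform Om A y z.
Proof.
  unfold bform, dot. rewrite <- !rsum_scal, <- rsum_add. apply rsum_ext. intros; ring.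
Qed.

Lemma bform_linr Om A a b x y z :
  bform Om A z (fun i => a * x i + b * y i) = a * bform Om A z x + b * bform Om A z y.
Proof.
  unfold bform, dot, mat_vec. rewrite <- !rsum_scal, <- rsum_add. apply rsum_ext. intros i _.
  rewrite (rsum_ext _ _ (fun j => a * (A i j * x j) + b * (A i j * y j))) by (intros; ring).
  rewrite rsum_add, !rsum_scal. ring.
Qed.

Lemma bform_vsub_l Om A x y z :
  bform Om A (vsub x y) z = bform Om A x z - bform Om A y z.
Proof.
  rewrite (bform_ext Om A _ (fun i => 1 * x i + (-1) * y i) z z) by (intros k _; unfold vsub; ring).
  rewrite bform_linl. ring.
Qed.

Lemma bform_vsub_r Om A x y z :
  bform Om A z (vsub x y) = bform Om A z x - bform Om A z y.
Proof.
  rewrite (bform_ext Om A z z _ (fun i => 1 * x i + (-1) * y i)) by (intros k _; unfold vsub; ring).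
  rewrite bform_linr. ring.
Qed.

Lemma bform_e_vec_l Om A i y : (i < Om)%nat -> bform Om A (e_vec i) y = mat_vec Om A y i.
Proof. apply dot_e_vec_l. Qed.

Lemma bform_zero_l Om A x y : vec_eq Om x (fun _ => 0) -> bform Om A x y = 0.
Proof. apply dot_zero_l. Qed.

Lemma bform_double Om A x y :
  bform Om A x y = rsum Om (fun i => rsum Om (fun j => x i * A i j * y j)).
Proof.
  unfold bform, dot, mat_vec. apply rsum_ext. intros i _. rewrite <- rsum_scal.
  apply rsum_ext. intros; ring.
Qed.

Lemma bform_sym Om A x y : symmetric Om A -> bform Om A x y = bform Om A y x.
Proof.
  intros HA. rewrite !bform_double, rsum_swap. apply rsum_ext. intros i Hi.
  apply rsum_ext. intros j Hj. rewrite (HA j i) by assumption. ring.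
Qed.

Lemma normK2_vsub_comm Om K x y : normK2 Om K (vsub x y) = normK2 Om K (vsub y x).
Proof.
  change (bform Om K (vsub x y) (vsub x y) = bform Om K (vsub y x) (vsub y x)).
  rewrite !bform_vsub_l, !bform_vsub_r. ring.
Qed.

Lemma pos_def_psd Om A : pos_def Om A -> psd Om A.
Proof.
  intros H x. destruct (classic (nonzero_vec Om x)) as [Hx|Hx].
  - apply Rlt_le, H, Hx.
  - rewrite bform_zero_l by (apply vec_eq_zero_of_not_nonzero, Hx). lra.
Qed.

Lemma normK2_nonneg Om K x : pos_def Om K -> 0 <= normK2 Om K x.
Proof. intros H. exact (pos_def_psd Om K H x). Qed.

Lemma quadratic_nonneg_discriminant a b c :
  0 <= c -> (forall t, 0 <= a + 2 * t * b + t * t * c) -> b * b <= a * c.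
Proof.
  intros Hc H. destruct (Req_dec c 0) as [->|Hc0].
  - destruct (Req_dec b 0) as [->|Hb]; [specialize (H 0); nra|].
    specialize (H (- (a + 1) / (2 * b))).
    replace (a + 2 * (- (a + 1) / (2 * b)) * b + - (a + 1) / (2 * b) * (- (a + 1) / (2 * b)) * 0)
      with (-1) in H by (field; exact Hb). lra.
  - specialize (H (- b / c)).
    replace (a + 2 * (- b / c) * b + - b / c * (- b / c) * c) with (a - b * b / c) in H
      by (field; exact Hc0).
    assert (Hbc : b * b / c * c <= a * c) by (apply Rmult_le_compat_r; lra).
    replace (b * b / c * c) with (b * b) in Hbc by (field; exact Hc0). exact Hbc.
Qed.

Lemma bform_cauchy_schwarz Om A x y : symmetric Om A -> psd Om A ->
  bform Om A x y * bform Om A x y <= bform Om A x x * bform Om A y y.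
Proof.
  intros Hs Hp. apply quadratic_nonneg_discriminant; [apply Hp|]. intros t.
  specialize (Hp (fun i => 1 * x i + t * y i)).
  rewrite bform_linl, !bform_linr, (bform_sym Om A y x Hs) in Hp. nra.
Qed.

Definition mat_abs_sum (Om : nat) (A : mat) : R :=
  rsum Om (fun i => rsum Om (fun j => Rabs (A i j))).

Lemma mat_abs_sum_nonneg Om A : 0 <= mat_abs_sum Om A.
Proof. apply rsum_nonneg; intros; apply rsum_nonneg; intros; apply Rabs_pos. Qed.

Lemma bform_le_abs_sum Om A x : bform Om A x x <= mat_abs_sum Om A * dot Om x x.
Proof.
  rewrite bform_double. unfold mat_abs_sum. rewrite Rmult_comm, <- rsum_scal. apply rsum_le.
  intros i Hi. rewrite <- rsum_scal. apply rsum_le. intros j Hj.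
  assert (x i * x i <= dot Om x x)
    by (apply (rsum_term_le Om (fun k => x k * x k)); [intros; nra | exact Hi]).
  assert (x j * x j <= dot Om x x)
    by (apply (rsum_term_le Om (fun k => x k * x k)); [intros; nra | exact Hj]).
  assert (Hxy : Rabs (x i * x j) <= dot Om x x) by (apply Rabs_le; split; nra).
  replace (x i * A i j * x j) with (A i j * (x i * x j)) by ring.
  eapply Rle_trans; [apply Rle_abs|]. rewrite Rabs_mult, (Rmult_comm (dot Om x x)).
  apply Rmult_le_compat_l; [apply Rabs_pos | exact Hxy].
Qed.

(** * The largest eigenvalue bounds the quadratic form *)

Lemma rayleigh_least_bound Om A : (1 <= Om)%nat ->
  exists mu, (forall x, bform Om A x x <= mu * dot Om x x) /\
    (forall nu, (forall x, bform Om A x x <= nu * dot Om x x) -> mu <= nu).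
Proof.
  intros HOm.
  set (E := fun r => exists x, nonzero_vec Om x /\ r * dot Om x x = bform Om A x x).
  assert (Equot : forall x, nonzero_vec Om x -> E (bform Om A x x / dot Om x x)).
  { intros x Hx. exists x. split; [exact Hx|].
    pose proof (dot_self_pos Om x Hx). field. lra. }
  assert (Hbound : forall nu, (forall x, bform Om A x x <= nu * dot Om x x) ->
                              is_upper_bound E nu).
  { intros nu Hnu r [x [Hx Er]]. pose proof (dot_self_pos Om x Hx).
    apply Rmult_le_reg_r with (dot Om x x); [lra|]. rewrite Er. apply Hnu. }
  assert (He0 : nonzero_vec Om (e_vec 0)).
  { exists 0%nat. split; [lia|]. unfold e_vec. destruct (Nat.eq_dec 0 0); [lra | congruence]. }
  destruct (completeness E) as [mu [Hub Hleast]].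
  - exists (mat_abs_sum Om A). apply Hbound. apply bform_le_abs_sum.
  - eexists. apply Equot, He0.
  - exists mu. split; [|intros nu Hnu; apply Hleast, Hbound, Hnu].
    intros x. destruct (classic (nonzero_vec Om x)) as [Hx|Hx].
    + pose proof (Hub _ (Equot x Hx)). pose proof (dot_self_pos Om x Hx).
      replace (bform Om A x x) with (bform Om A x x / dot Om x x * dot Om x x) by (field; lra).
      apply Rmult_le_compat_r; lra.
    + rewrite bform_zero_l, dot_zero_l by (apply vec_eq_zero_of_not_nonzero, Hx). lra.
Qed.

Lemma dot_transpose_mat_vec Om N x y :
  dot Om (fun k => rsum Om (fun j => x j * N j k)) y = dot Om x (mat_vec Om N y).
Proof.
  unfold dot, mat_vec.
  transitivity (rsum Om (fun k => rsum Om (fun j => x j * N j k * y k))).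
  { apply rsum_ext; intros k _. rewrite Rmult_comm, <- rsum_scal. apply rsum_ext; intros; ring. }
  rewrite rsum_swap. apply rsum_ext; intros j _. rewrite <- rsum_scal. apply rsum_ext; intros; ring.
Qed.

Lemma mat_vec_left_inverse Om N M y :
  (forall i j, (i < Om)%nat -> (j < Om)%nat -> rsum Om (fun k => N i k * M k j) = e_vec j i) ->
  vec_eq Om (mat_vec Om N (mat_vec Om M y)) y.
Proof.
  intros HNM i Hi. unfold mat_vec.
  transitivity (rsum Om (fun l => rsum Om (fun k => N i k * M k l) * y l)).
  { transitivity (rsum Om (fun k => rsum Om (fun l => N i k * M k l * y l))).
    - apply rsum_ext; intros k _. rewrite <- rsum_scal. apply rsum_ext; intros; ring.
    - rewrite rsum_swap. apply rsum_ext; intros l _.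
      rewrite Rmult_comm, <- rsum_scal. apply rsum_ext; intros; ring. }
  rewrite (rsum_ext _ _ (fun l => y l * e_vec i l)).
  - apply rsum_mul_e_vec, Hi.
  - intros l Hl. rewrite HNM, e_vec_sym by assumption. ring.
Qed.

Lemma psd_singular_or_coercive Om M : symmetric Om M -> psd Om M ->
  (exists v, nonzero_vec Om v /\
     forall j, (j < Om)%nat -> rsum Om (fun i => v i * M i j) = 0) \/
  (exists c, 0 < c /\ forall x, dot Om x x <= c * bform Om M x x).
Proof.
  intros Hs Hp.
  destruct (MxDichotomy.left_kernel_or_left_inverse Om M) as [Hker | [N HN]];
    [left; exact Hker | right].
  set (C := mat_abs_sum Om (fun k j => N j k)).
  assert (HC : 0 <= C) by apply mat_abs_sum_nonneg.
  exists (C + 1). split; [lra|].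
  intros x.
  set (z := fun k => rsum Om (fun j => x j * N j k)).
  assert (Hz : forall y, bform Om M z y = dot Om x y).
  { intros y. unfold bform, z. rewrite dot_transpose_mat_vec.
    apply dot_ext; [intros k _; reflexivity | apply mat_vec_left_inverse, HN]. }
  assert (Hxz : dot Om x z <= C * dot Om x x).
  { eapply Rle_trans; [|apply bform_le_abs_sum]. right.
    apply rsum_ext; intros k _. f_equal. apply rsum_ext; intros; ring. }
  pose proof (bform_cauchy_schwarz Om M z x Hs Hp) as Hcs. rewrite !Hz in Hcs.
  pose proof (dot_self_nonneg Om x). pose proof (Hp x).
  destruct (Req_dec (dot Om x x) 0) as [E|E]; [rewrite E; nra|].
  assert (dot Om x x <= C * bform Om M x x).
  { apply Rmult_le_reg_l with (dot Om x x); [lra|]. nra. }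
  nra.
Qed.

(* The least constant [mu] with [x^T K x <= mu |x|^2] is an eigenvalue: otherwise
   [mu I - K] is coercive and [mu] could be lowered.  Finite dimension enters
   through [left_kernel_or_left_inverse]. *)
Lemma normK2_le_lambda_max Om K lam : (1 <= Om)%nat -> symmetric Om K ->
  is_lambda_max Om K lam -> forall x, normK2 Om K x <= lam * dot Om x x.
Proof.
  intros HOm HK [_ Hmax].
  destruct (rayleigh_least_bound Om K HOm) as [mu [Hmu Hleast]].
  set (M := fun i j => mu * e_vec i j - K i j).
  assert (HM : forall x y, bform Om M x y = mu * dot Om x y - bform Om K x y).
  { intros x y. unfold bform, dot, mat_vec, M.
    rewrite <- rsum_scal, <- rsum_sub. apply rsum_ext. intros i Hi.
    rewrite (rsum_ext _ _ (fun j => mu * (y j * e_vec i j) - K i j * y j)) by (intros; ring).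
    rewrite rsum_sub, rsum_scal, rsum_mul_e_vec by exact Hi. ring. }
  assert (HMs : symmetric Om M).
  { intros i j Hi Hj. unfold M. rewrite e_vec_sym, (HK i j) by assumption. reflexivity. }
  assert (HMp : psd Om M) by (intros x; rewrite HM; specialize (Hmu x); lra).
  destruct (psd_singular_or_coercive Om M HMs HMp) as [[v [Hv Hker]] | [c [Hc Hcoer]]].
  - assert (Heig : is_eigenvalue Om K mu).
    { exists v. split; [exact Hv|]. intros j Hj. specialize (Hker j Hj). unfold M in Hker.
      rewrite (rsum_ext _ _ (fun i => mu * (v i * e_vec j i) - K j i * v i)) in Hker.
      - rewrite rsum_sub, rsum_scal, rsum_mul_e_vec in Hker by exact Hj. unfold mat_vec. lra.
      - intros i Hi. rewrite e_vec_sym, (HK j i) by assumption. ring. }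
    intros x. pose proof (Hmax mu Heig). pose proof (dot_self_nonneg Om x).
    eapply Rle_trans; [apply Hmu|]. apply Rmult_le_compat_r; assumption.
  - exfalso.
    assert (Hbetter : forall x, bform Om K x x <= (mu - / c) * dot Om x x).
    { intros x. specialize (Hcoer x). rewrite HM in Hcoer.
      apply Rmult_le_reg_l with c; [exact Hc|].
      replace (c * ((mu - / c) * dot Om x x)) with (c * (mu * dot Om x x) - dot Om x x)
        by (field; lra).
      lra. }
    pose proof (Hleast _ Hbetter). pose proof (Rinv_0_lt_compat c Hc). lra.
Qed.

Lemma lambda_max_pos Om K lam : pos_def Om K -> is_lambda_max Om K lam -> 0 < lam.
Proof.
  intros Hpd [[v [Hv Hev]] _].
  pose proof (Hpd v Hv) as H. pose proof (dot_self_pos Om v Hv).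
  unfold normK2 in H. rewrite (dot_ext Om v v _ (fun i => lam * v i)) in H
    by (intros i Hi; first [reflexivity | apply Hev, Hi]).
  unfold dot in H. rewrite (rsum_ext _ _ (fun i => lam * (v i * v i))), rsum_scal in H
    by (intros; ring).
  fold (dot Om v v) in H. nra.
Qed.

Lemma inverse_diag_bound Om K Kinv j :
  symmetric Om K -> pos_def Om K -> is_inverse Om K Kinv -> (j < Om)%nat ->
  0 < Kinv j j /\ forall u, u j * u j <= Kinv j j * normK2 Om K u.
Proof.
  intros HK Hpd Hinv Hj.
  set (z := fun k => Kinv k j).
  assert (Hz : forall u, bform Om K u z = u j).
  { intros u. unfold bform. rewrite (dot_ext Om u u _ (e_vec j)).
    - rewrite dot_comm. apply dot_e_vec_l, Hj.
    - intros k _. reflexivity.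
    - intros k Hk. apply (Hinv k j Hk Hj). }
  split.
  - change (Kinv j j) with (z j). rewrite <- (Hz z). apply Hpd.
    destruct (classic (nonzero_vec Om z)) as [Hnz|Hnz]; [exact Hnz|exfalso].
    pose proof (Hz (e_vec j)) as E.
    rewrite bform_sym, bform_zero_l in E by (exact HK || apply vec_eq_zero_of_not_nonzero, Hnz).
    unfold e_vec in E. destruct (Nat.eq_dec j j); [lra | congruence].
  - intros u. pose proof (bform_cauchy_schwarz Om K u z HK (pos_def_psd Om K Hpd)) as H.
    rewrite Hz, Hz in H. unfold z in H. change (normK2 Om K u) with (bform Om K u u). lra.
Qed.

Lemma rmin_upto_le n f j : (j <= n)%nat -> rmin_upto n f <= f j.
Proof.
  induction n as [|n IH]; simpl; intros Hj.
  - replace j with 0%nat by lia. lra.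
  - destruct (Nat.eq_dec j (S n)) as [->|Hjn]; [apply Rmin_r|].
    eapply Rle_trans; [apply Rmin_l | apply IH; lia].
Qed.

Lemma rmin_upto_pos n f : (forall j, (j <= n)%nat -> 0 < f j) -> 0 < rmin_upto n f.
Proof.
  induction n as [|n IH]; simpl; intros H; [apply H; lia|].
  apply Rmin_glb_lt; [apply IH; intros; apply H | apply H]; lia.
Qed.

Lemma le_rmax_upto n f j : (j <= n)%nat -> f j <= rmax_upto n f.
Proof.
  induction n as [|n IH]; simpl; intros Hj.
  - replace j with 0%nat by lia. lra.
  - destruct (Nat.eq_dec j (S n)) as [->|Hjn]; [apply Rmax_r|].
    eapply Rle_trans; [apply IH; lia | apply Rmax_l].
Qed.

Lemma rmax_inverse_diag_pos Om K Kinv : (1 <= Om)%nat ->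
  symmetric Om K -> pos_def Om K -> is_inverse Om K Kinv ->
  0 < rmax_upto (Om - 1) (fun k => Kinv k k).
Proof.
  intros HOm HK Hpd Hinv. apply Rlt_le_trans with (Kinv 0%nat 0%nat).
  - apply (inverse_diag_bound Om K Kinv 0); (assumption || lia).
  - apply (le_rmax_upto (Om - 1) (fun k => Kinv k k)). lia.
Qed.

Lemma one_sub_inv_INR_ge_half Om : (2 <= Om)%nat -> 1 / 2 <= 1 - 1 / INR Om.
Proof.
  intros HOm. assert (HOm2 : 2 <= INR Om) by (apply (le_INR 2); exact HOm).
  assert (1 / INR Om <= 1 / 2) by (apply Rmult_le_compat_l, Rinv_le_contravar; lra). lra.
Qed.

Lemma in_simplex_ext Om p q : vec_eq Om p q -> in_simplex Om p -> in_simplex Om q.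
Proof.
  intros E [Hpos Hsum]. split.
  - intros j Hj. rewrite <- E by exact Hj. apply Hpos, Hj.
  - rewrite <- Hsum. symmetry. apply rsum_ext, E.
Qed.

Lemma in_simplex_of_interior Om p : in_simplex_interior Om p -> in_simplex Om p.
Proof. intros [Hpos Hsum]. split; [intros j Hj; left; apply Hpos, Hj | exact Hsum]. Qed.

Lemma in_simplex_le_1 Om p j : in_simplex Om p -> (j < Om)%nat -> p j <= 1.
Proof. intros [Hpos Hsum] Hj. rewrite <- Hsum. apply rsum_term_le; assumption. Qed.

Lemma in_simplex_e_vec Om i : (i < Om)%nat -> in_simplex Om (e_vec i).
Proof.
  intros Hi. split.
  - intros j _. unfold e_vec. destruct (Nat.eq_dec j i); lra.
  - rewrite (rsum_ext _ _ (fun k => 1 * e_vec i k)) by (intros; ring).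
    apply rsum_mul_e_vec, Hi.
Qed.

Lemma in_simplex_segment Om p q a : in_simplex Om p -> in_simplex Om q -> 0 <= a <= 1 ->
  in_simplex Om (vadd p (vscale a (vsub q p))).
Proof.
  intros [Hp Hp1] [Hq Hq1] Ha. unfold vadd, vscale, vsub. split.
  - intros j Hj. specialize (Hp j Hj). specialize (Hq j Hj). nra.
  - rewrite rsum_add, rsum_scal, rsum_sub, Hp1, Hq1. ring.
Qed.

Lemma in_simplex_dist_le_2 Om p q : in_simplex Om p -> in_simplex Om q ->
  dot Om (vsub p q) (vsub p q) <= 2.
Proof.
  intros Hp Hq. apply Rle_trans with (rsum Om (fun k => p k + q k)).
  - apply rsum_le. intros k Hk. unfold vsub.
    pose proof (proj1 Hp k Hk). pose proof (proj1 Hq k Hk).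
    pose proof (in_simplex_le_1 Om p k Hp Hk). pose proof (in_simplex_le_1 Om q k Hq Hk). nra.
  - rewrite rsum_add, (proj2 Hp), (proj2 Hq). lra.
Qed.

(** * Exact line search and the vertex gap *)

Lemma normK2_exact_line_search Om K d v : symmetric Om K -> normK2 Om K d <> 0 ->
  normK2 Om K (fun k => bform Om K d v / normK2 Om K d * d k - v k)
  = normK2 Om K v - bform Om K d v ^ 2 / normK2 Om K d.
Proof.
  intros HK HD. set (a := bform Om K d v / normK2 Om K d).
  assert (E : vec_eq Om (fun k => a * d k - v k) (fun k => a * d k + (-1) * v k))
    by (intros k _; ring).
  change (bform Om K (fun k => a * d k - v k) (fun k => a * d k - v k)
          = bform Om K v v - bform Om K d v ^ 2 / bform Om K d d).
  rewrite (bform_ext _ _ _ _ _ _ E E), bform_linl, !bform_linr, (bform_sym Om K v d HK).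
  unfold a. change (normK2 Om K d) with (bform Om K d d). field. exact HD.
Qed.

Lemma dot_sub_const_r Om p g c :
  dot Om p g - c * rsum Om p = rsum Om (fun j => p j * (g j - c)).
Proof.
  rewrite (rsum_ext _ (fun j => p j * (g j - c)) (fun j => p j * g j - c * p j)) by (intros; ring).
  rewrite rsum_sub, rsum_scal. reflexivity.
Qed.

Lemma weighted_gap_bound Om (g p u : vec) i m s :
  (forall j, (j < Om)%nat -> g i <= g j) ->
  0 <= m -> (forall j, (j < Om)%nat -> m <= p j) -> rsum Om p = 1 ->
  0 <= s -> (forall j, (j < Om)%nat -> u j <= s) -> rsum Om u = 0 ->
  m * dot Om u g <= s * (dot Om p g - g i).
Proof.
  intros Hg Hm Hp Hp1 Hs Hu Hu0.
  set (T := rsum Om (fun j => g j - g i)).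
  assert (HT : 0 <= T) by (apply rsum_nonneg; intros j Hj; pose proof (Hg j Hj); lra).
  assert (Hug : dot Om u g <= s * T).
  { replace (dot Om u g) with (dot Om u g - g i * rsum Om u) by (rewrite Hu0; ring).
    rewrite dot_sub_const_r. unfold T. rewrite <- rsum_scal. apply rsum_le. intros j Hj.
    pose proof (Hg j Hj). pose proof (Hu j Hj). nra. }
  assert (Hpg : m * T <= dot Om p g - g i).
  { replace (g i) with (g i * rsum Om p) at 1 by (rewrite Hp1; ring).
    rewrite dot_sub_const_r. unfold T. rewrite <- rsum_scal. apply rsum_le. intros j Hj.
    pose proof (Hg j Hj). pose proof (Hp j Hj). nra. }
  nra.
Qed.

(** * One step of the vertex-direction method *)

Section VertexStep.

Variables (Om : nat) (K : mat) (what w : vec) (i : nat) (w' : vec).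
Hypothesis K_sym : symmetric Om K.
Hypothesis K_pd : pos_def Om K.
Hypothesis what_simplex : in_simplex Om what.
Hypothesis w_simplex : in_simplex Om w.
Hypothesis i_choice : is_vertex_choice Om K what w i.
Hypothesis w'_step : vd_step Om K what w i w'.

Let u := vsub w what.
Let d := vsub (e_vec i) w.
Let gain := bform Om K d (vsub what w).
Let gap := dot Om what (mat_vec Om K u) - mat_vec Om K u i.

Lemma gap_nonneg : 0 <= gap.
Proof.
  destruct i_choice as [_ Hmin]. destruct what_simplex as [Hpos Hsum]. fold u in Hmin.
  unfold gap. replace (mat_vec Om K u i) with (mat_vec Om K u i * rsum Om what) at 1
    by (rewrite Hsum; ring).
  rewrite dot_sub_const_r. apply rsum_nonneg. intros j Hj.
  specialize (Hpos j Hj). specialize (Hmin j Hj). nra.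
Qed.

Lemma gain_eq : gain = normK2 Om K u + gap.
Proof.
  destruct i_choice as [Hi _].
  unfold gain, gap. rewrite <- (bform_e_vec_l Om K i u Hi).
  change (dot Om what (mat_vec Om K u)) with (bform Om K what u).
  change (normK2 Om K u) with (bform Om K u u).
  unfold u, d. rewrite !bform_vsub_l, !bform_vsub_r. ring.
Qed.

Lemma gain_nonneg : 0 <= gain.
Proof.
  rewrite gain_eq. pose proof gap_nonneg. pose proof (normK2_nonneg Om K u K_pd). lra.
Qed.

(* [normK2 d - gain = normK2 (e_i - what) + gap]. *)
Lemma gain_le_normK2_dir : gain <= normK2 Om K d.
Proof.
  destruct i_choice as [Hi _].
  pose proof gap_nonneg as Hgap. pose proof (pos_def_psd Om K K_pd (vsub (e_vec i) what)) as He.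
  unfold gap in Hgap. rewrite <- (bform_e_vec_l Om K i u Hi) in Hgap.
  change (dot Om what (mat_vec Om K u)) with (bform Om K what u) in Hgap.
  unfold gain. change (normK2 Om K d) with (bform Om K d d).
  unfold u, d in *. rewrite !bform_vsub_l, !bform_vsub_r in *.
  rewrite (bform_sym Om K what (e_vec i) K_sym), (bform_sym Om K what w K_sym),
    (bform_sym Om K (e_vec i) w K_sym) in *.
  lra.
Qed.

Lemma gain_sq_lower m L2 :
  0 <= m -> (forall j, (j < Om)%nat -> m <= what j) ->
  0 <= L2 -> (forall j, (j < Om)%nat -> u j * u j <= L2 * normK2 Om K u) ->
  m ^ 2 * normK2 Om K u <= L2 * gain ^ 2.
Proof.
  intros Hm Hmw HL2 Hu. destruct i_choice as [_ Hmin].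
  set (old := normK2 Om K u).
  assert (Hold : 0 <= old) by apply normK2_nonneg, K_pd.
  set (s := sqrt (L2 * old)).
  assert (Hs : 0 <= s) by apply sqrt_pos.
  assert (Hs2 : s * s = L2 * old) by (apply sqrt_sqrt; nra).
  assert (Hus : forall j, (j < Om)%nat -> u j <= s).
  { intros j Hj. specialize (Hu j Hj). fold old in Hu. rewrite <- Hs2 in Hu. nra. }
  assert (Hu0 : rsum Om u = 0).
  { unfold u, vsub. rewrite rsum_sub, (proj2 w_simplex), (proj2 what_simplex). ring. }
  assert (Hmg : m * old <= s * gap)
    by (apply (weighted_gap_bound Om (mat_vec Om K u) what u i m s);
        first [exact (proj2 what_simplex) | assumption]).
  pose proof gap_nonneg. pose proof gain_eq as Hgain. fold old in Hgain.
  assert (Hsq : (m * old) * (m * old) <= L2 * old * (gain * gain)).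
  { assert (Hgg : gap * gap <= gain * gain) by nra.
    rewrite <- Hs2. apply Rle_trans with ((s * gap) * (s * gap)).
    - apply Rmult_le_compat; nra.
    - replace ((s * gap) * (s * gap)) with (s * s * (gap * gap)) by ring.
      apply Rmult_le_compat_l; nra. }
  destruct (Req_dec old 0) as [E|E]; [rewrite E; nra|].
  apply Rmult_le_reg_l with old; [lra | nra].
Qed.

Lemma vd_step_in_simplex : in_simplex Om w'.
Proof.
  destruct w'_step as [Hstay Hmove]. destruct i_choice as [Hi _].
  destruct (classic (vec_eq Om (e_vec i) w)) as [He|He].
  - apply (in_simplex_ext Om w); [|exact w_simplex].
    intros k Hk. symmetry. apply (Hstay He k Hk).
  - apply (in_simplex_ext Om (vadd w (vscale (alpha_hat Om K what w i) (vsub (e_vec i) w)))).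
    { intros k Hk. symmetry. apply (Hmove He k Hk). }
    apply in_simplex_segment; [exact w_simplex | apply in_simplex_e_vec, Hi |].
    assert (HD : 0 < normK2 Om K d) by (apply K_pd, nonzero_vsub, He).
    pose proof gain_nonneg. pose proof gain_le_normK2_dir.
    change (alpha_hat Om K what w i) with (gain / normK2 Om K d).
    split.
    + unfold Rdiv. apply Rmult_le_pos; [lra | left; apply Rinv_0_lt_compat, HD].
    + apply Rmult_le_reg_r with (normK2 Om K d); [exact HD|].
      unfold Rdiv. rewrite Rmult_assoc, Rinv_l; lra.
Qed.

(* When [e_i = w] both [gain] and [normK2 d] vanish and the formula holds with
   Rocq's [x / 0 = 0]. *)
Lemma vd_step_error : normK2 Om K (vsub w' what) = normK2 Om K u - gain ^ 2 / normK2 Om K d.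
Proof.
  destruct w'_step as [Hstay Hmove].
  destruct (classic (vec_eq Om (e_vec i) w)) as [He|He].
  - assert (Hgain : gain = 0).
    { apply bform_zero_l. intros k Hk. unfold d, vsub. rewrite He by exact Hk. ring. }
    rewrite Hgain. unfold Rdiv. rewrite pow_i, Rmult_0_l, Rminus_0_r by lia.
    apply bform_ext; intros k Hk; unfold vsub; rewrite (Hstay He k Hk); reflexivity.
  - assert (HD : normK2 Om K d <> 0) by (apply Rgt_not_eq, K_pd, nonzero_vsub, He).
    transitivity (normK2 Om K (fun k => gain / normK2 Om K d * d k - vsub what w k)).
    + apply bform_ext; intros k Hk; unfold vsub; rewrite (Hmove He k Hk); unfold vadd, vscale, vsub;
        change (alpha_hat Om K what w i) with (gain / normK2 Om K d); unfold d, vsub; ring.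
    + unfold u. rewrite normK2_vsub_comm. apply normK2_exact_line_search; assumption.
Qed.

Lemma vd_step_decrease kappa rho :
  0 < rho -> normK2 Om K d <= rho -> kappa * normK2 Om K u <= gain ^ 2 ->
  normK2 Om K (vsub w' what) <= normK2 Om K u * (1 - kappa / rho).
Proof.
  intros Hrho HDrho Hkappa. rewrite vd_step_error.
  pose proof (normK2_nonneg Om K d K_pd) as HD0. pose proof (normK2_nonneg Om K u K_pd) as Hold.
  destruct (Req_dec (normK2 Om K d) 0) as [HD|HD].
  - assert (Hg : gain = 0).
    { pose proof (bform_cauchy_schwarz Om K d (vsub what w) K_sym (pos_def_psd Om K K_pd)) as Hcs.
      change (bform Om K d d) with (normK2 Om K d) in Hcs.
      change (bform Om K d (vsub what w)) with gain in Hcs. rewrite HD in Hcs. nra. }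
    assert (Hold0 : normK2 Om K u = 0) by (pose proof gain_eq; pose proof gap_nonneg; lra).
    rewrite Hold0, Hg. unfold Rdiv. rewrite pow_i by lia. lra.
  - assert (Hgk : kappa * normK2 Om K u / rho <= gain ^ 2 / normK2 Om K d).
    { apply Rle_trans with (gain ^ 2 / rho); unfold Rdiv.
      - apply Rmult_le_compat_r; [left; apply Rinv_0_lt_compat, Hrho | exact Hkappa].
      - apply Rmult_le_compat_l; [apply pow2_ge_0 | apply Rinv_le_contravar; lra]. }
    replace (normK2 Om K u * (1 - kappa / rho)) with (normK2 Om K u - kappa * normK2 Om K u / rho)
      by (field; lra).
    lra.
Qed.

End VertexStep.

Lemma vd_step_contraction Om K Kinv lam what w i w' :
  (2 <= Om)%nat -> symmetric Om K -> pos_def Om K -> is_lambda_max Om K lam ->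
  is_inverse Om K Kinv -> in_simplex_interior Om what -> in_simplex Om w ->
  is_vertex_choice Om K what w i -> vd_step Om K what w i w' ->
  normK2 Om K (vsub w' what) <= normK2 Om K (vsub w what) *
    (1 - rmin_upto (Om - 1) what ^ 2 / rmax_upto (Om - 1) (fun k => Kinv k k)
         / (4 * (lam * (1 - 1 / INR Om)))).
Proof.
  intros HOm HK Hpd Hlam Hinv Hh Hw Hi Hstep.
  pose proof (rmax_inverse_diag_pos Om K Kinv ltac:(lia) HK Hpd Hinv) as HL2.
  set (m := rmin_upto (Om - 1) what). set (L2 := rmax_upto (Om - 1) (fun k => Kinv k k)) in *.
  assert (Hm : 0 < m) by (apply rmin_upto_pos; intros j Hj; apply (proj1 Hh); lia).
  pose proof (lambda_max_pos Om K lam Hpd Hlam).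
  pose proof (one_sub_inv_INR_ge_half Om HOm).
  pose proof (in_simplex_of_interior Om what Hh) as Hwhat.
  apply (vd_step_decrease Om K what w i w'); try assumption; [nra | |].
  - eapply Rle_trans; [apply (normK2_le_lambda_max Om K lam); [lia | assumption..]|].
    pose proof (in_simplex_dist_le_2 Om (e_vec i) w (in_simplex_e_vec Om i (proj1 Hi)) Hw). nra.
  - apply Rmult_le_reg_l with L2; [exact HL2|].
    replace (L2 * (m ^ 2 / L2 * normK2 Om K (vsub w what))) with (m ^ 2 * normK2 Om K (vsub w what))
      by (field; lra).
    apply (gain_sq_lower Om K what w i); try assumption; [lra | | lra |].
    + intros j Hj. apply rmin_upto_le. lia.
    + intros j Hj. destruct (inverse_diag_bound Om K Kinv j HK Hpd Hinv Hj) as [_ Hu].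
      pose proof (le_rmax_upto (Om - 1) (fun k => Kinv k k) j ltac:(lia)).
      pose proof (normK2_nonneg Om K (vsub w what) Hpd).
      eapply Rle_trans; [apply Hu|]. apply Rmult_le_compat_r; assumption.
Qed.

Lemma vd_iterates_in_simplex Om K what (w : nat -> vec) (idx : nat -> nat) :
  symmetric Om K -> pos_def Om K -> in_simplex Om what -> in_simplex Om (w 1%nat) ->
  (forall n, (1 <= n)%nat ->
     is_vertex_choice Om K what (w n) (idx n) /\ vd_step Om K what (w n) (idx n) (w (S n))) ->
  forall n, (1 <= n)%nat -> in_simplex Om (w n).
Proof.
  intros HK Hpd Hwhat Hw1 Hit n Hn. induction n as [|n IH]; [lia|].
  destruct (Nat.eq_dec n 0) as [->|Hn0]; [exact Hw1|].
  destruct (Hit n ltac:(lia)) as [Hv Hs].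
  apply (vd_step_in_simplex Om K what (w n) (idx n)); try assumption. apply IH. lia.
Qed.

Lemma exp_decay_of_step (a : nat -> R) (r : R) :
  (forall n, (1 <= n)%nat -> a (S n) <= a n * exp (- r)) ->
  forall n, (1 <= n)%nat -> a (S n) <= a 1%nat * exp (- (r * INR n)).
Proof.
  intros Hstep n Hn. induction n as [|n IH]; [lia|].
  destruct (Nat.eq_dec n 0) as [->|Hn0].
  - simpl INR. rewrite Rmult_1_r. apply Hstep. lia.
  - eapply Rle_trans; [apply Hstep; lia|].
    rewrite S_INR, Rmult_plus_distr_l, Rmult_1_r, Ropp_plus_distr, exp_plus, <- Rmult_assoc.
    apply Rmult_le_compat_r; [left; apply exp_pos | apply IH; lia].
Qed.

Theorem lemmaA6 (Om : nat) (K Kinv : mat) (lam : R) (what : vec)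
  (w : nat -> vec) (idx : nat -> nat) :
  (2 <= Om)%nat ->
  symmetric Om K -> pos_def Om K ->
  is_lambda_max Om K lam ->
  is_inverse Om K Kinv ->
  in_simplex_interior Om what ->
  in_simplex Om (w 1%nat) ->
  (forall n, (1 <= n)%nat ->
     is_vertex_choice Om K what (w n) (idx n) /\
     vd_step Om K what (w n) (idx n) (w (S n))) ->
  let Rstar := sqrt (lam * (1 - 1 / INR Om)) in
  let wstar := rmin_upto (Om - 1) what in
  let L := sqrt (rmax_upto (Om - 1) (fun i => Kinv i i)) in
  let astar := wstar / L in
  forall n, (1 <= n)%nat ->
    normK2 Om K (vsub (w (S n)) what)
    <= normK2 Om K (vsub (w 1%nat) what)
       * exp (- (astar ^ 2 * INR n) / (4 * Rstar ^ 2)).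
Proof.
  intros HOm HK Hpd Hlam Hinv Hh Hw1 Hit Rstar wstar L astar n Hn.
  pose proof (rmax_inverse_diag_pos Om K Kinv ltac:(lia) HK Hpd Hinv) as HL2.
  pose proof (lambda_max_pos Om K lam Hpd Hlam).
  pose proof (one_sub_inv_INR_ge_half Om HOm).
  set (L2 := rmax_upto (Om - 1) (fun k => Kinv k k)) in *.
  set (r := wstar ^ 2 / L2 / (4 * (lam * (1 - 1 / INR Om)))).
  replace (- (astar ^ 2 * INR n) / (4 * Rstar ^ 2)) with (- (r * INR n)).
  2:{ assert (HL : L ^ 2 = L2) by (apply pow2_sqrt; lra).
      assert (HR : Rstar ^ 2 = lam * (1 - 1 / INR Om)) by (apply pow2_sqrt; nra).
      assert (0 < L) by (apply sqrt_lt_R0; exact HL2).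
      unfold astar. replace ((wstar / L) ^ 2) with (wstar ^ 2 / L ^ 2) by (field; lra).
      assert (2 <= INR Om) by (apply (le_INR 2); exact HOm).
      rewrite HL, HR. unfold r. field. repeat split; nra. }
  revert n Hn. apply (exp_decay_of_step (fun n => normK2 Om K (vsub (w n) what))).
  intros n Hn. destruct (Hit n Hn) as [Hv Hs].
  eapply Rle_trans.
  { apply (vd_step_contraction Om K Kinv lam what (w n) (idx n)); try assumption.
    apply (vd_iterates_in_simplex Om K what w idx); try assumption.
    apply in_simplex_of_interior, Hh. }
  fold wstar L2 r. apply Rmult_le_compat_l; [apply normK2_nonneg, Hpd|].
  pose proof (exp_ineq1_le (- r)). lra.
Qed.
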